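(* Let $q$ be a prime power, let $\mu\ge 2$ be an integer, and put $\delta=1/\sqrt{(q+1)\ln(q+1)}$. Then \[ \ell_\mu(2,3,q)\le 2D\sqrt{(q+1)\ln(q+1)}+2 \] holds in each of the following cases: (a) $D=2.4$, if $\mu=2$ and $q\ge 97$; (b) $D=2.6$, if $\mu=3$ and $q\ge 181$; (c) $D=2.8$, if $\mu=4$ and $q\ge 125$; (d) $D=\mu+1$, if $\mu\le\sqrt{q}$ and $q\ge 4$; (e) $D=2\mu-1$, if $\mu\le \frac12\big((1-\delta)q-\delta+1\big)+1$ and $q\ge 3$.
   Context: A linear code $C$ over $\mathbb{F}_q$ with covering radius $R$ is an $(R,\mu)$-multiple covering of the farthest-off points ($(R,\mu)$-MCF code) if for every vector $x\in\mathbb{F}_q^n$ at Hamming distance exactly $R$ from $C$, the number of codewords of $C$ at distance $R$ from $x$ is at least $\mu$. The $\mu$-length function $\ell_\mu(R,r,q)$ is the smallest length $n$ of a linear $(R,\mu)$-MCF code over $\mathbb{F}_q$ of length $n$, codimension $r$ and covering radius $R$. Here $\ln$ is the natural logarithm. *)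

From HB Require Import structures.
From mathcomp Require Import all_boot all_order all_algebra.
From Stdlib Require Import Reals.
Set Implicit Arguments. Unset Strict Implicit. Unset Printing Implicit Defensive.

Section Codes.
Variables (F : finFieldType) (n : nat).

Definition hdist (x y : 'rV[F]_n) : nat := #|[set i : 'I_n | x ord0 i != y ord0 i]|.

(* d(x, C) = min over codewords c of C of d(x, c)  (0 \in C, so n is a safe default) *)
Definition dist_code (C : {vspace 'rV[F]_n}) (x : 'rV[F]_n) : nat :=
  \big[minn/n]_(c : 'rV[F]_n | c \in C) hdist x c.

Definition cov_radius (C : {vspace 'rV[F]_n}) : nat :=
  \max_(x : 'rV[F]_n) dist_code C x.

Definition is_MCF (C : {vspace 'rV[F]_n}) (R mu : nat) : Prop :=
  cov_radius C = R /\
  forall x : 'rV[F]_n, dist_code C x = R ->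
    (mu <= #|[set c : 'rV[F]_n | (c \in C) && (hdist x c == R)]|)%N.

Definition has_codim (C : {vspace 'rV[F]_n}) (r : nat) : Prop :=
  (r <= n)%N /\ \dim C = (n - r)%N.
End Codes.

(* the statement "ell_mu(R,r,q) <= b" for the field F of order q:
   some linear (R,mu)-MCF code over F of codimension r, covering radius R
   has length n <= b (equivalent to: the least such length is <= b) *)
Definition ell_mu_le (F : finFieldType) (mu Rad r : nat) (b : R) : Prop :=
  exists n : nat, (INR n <= b)%R /\
    exists C : {vspace 'rV[F]_n}, has_codim C r /\ is_MCF C Rad mu.

Definition mcf_bound (D : R) (q : nat) : R :=
  (2 * D * sqrt (INR (q + 1) * ln (INR (q + 1))) + 2)%R.

Definition mcf_delta (q : nat) : R := (/ sqrt (INR (q + 1) * ln (INR (q + 1))))%R.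

From mathcomp Require Import all_boot all_order all_algebra.
From Stdlib Require Import Reals.
From mathcomp Require ring.
From mathcomp Require Import zify.
From Stdlib Require Import Lra Lia Psatz.
From Stdlib Require Znat.

(* Take a parity-check matrix whose columns are (1, a, 0) for a in a multiset A
   and (0, b, 1) for b in a multiset B.  A syndrome that is not a multiple of a
   column has at least mu representations by two columns as soon as A and B each
   contain mu entries different from a fixed one and every equation
   x a + b = y (x <> 0) has mu solutions in A * B; the code then has codimension 3,
   covering radius 2 and is (2, mu)-MCF.  Let A be kA copies of an a-set and let B
   be mu + 1 distinct elements together with a family r of b elements meeting every
   translate y - x A once (kA = mu), or twice (2 kA >= mu).  A union bound over the
   q^2 pairs (x, y) shows that such r exists as soon as q^2 (1 - a/q)^b < 1
   (resp. q^3 b (1 - a/q)^(b-1) < 1), which holds for a, b of order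
   sqrt((q + 1) ln (q + 1)); the constants 1.25, 2.4 and 1.415 give the stated
   lengths, and for small q one takes A = F_q. *)

Set Implicit Arguments. Unset Strict Implicit. Unset Printing Implicit Defensive.

Section ParityCheck.
Import ring GRing.Theory.
Local Open Scope ring_scope.

Variable F : finFieldType.

Definition o0 : 'I_3 := @Ordinal 3 0 isT.
Definition o1 : 'I_3 := @Ordinal 3 1 isT.
Definition o2 : 'I_3 := @Ordinal 3 2 isT.

Definition row3 (a b c : F) : 'rV[F]_3 := \row_(i < 3) nth 0 [:: a; b; c] i.

Lemma row3E (v : 'rV[F]_3) : v = row3 (v 0 o0) (v 0 o1) (v 0 o2).
Proof.
apply/rowP => i; rewrite mxE.
by case: i => [[|[|[|//]]]] Hi /=; congr (v _ _); apply/val_inj.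
Qed.

Lemma scale_row3 l a b c : l *: row3 a b c = row3 (l * a) (l * b) (l * c).
Proof. by apply/rowP => i; rewrite !mxE; case: i => [[|[|[|//]]]] Hi. Qed.

Lemma add_row3 a b c a' b' c' :
  row3 a b c + row3 a' b' c' = row3 (a + a') (b + b') (c + c').
Proof. by apply/rowP => i; rewrite !mxE; case: i => [[|[|[|//]]]] Hi. Qed.

Lemma row3_inj a b c a' b' c' :
  row3 a b c = row3 a' b' c' -> [/\ a = a', b = b' & c = c'].
Proof.
move=> E; split.
- by have := congr1 (fun v : 'rV[F]_3 => v 0 o0) E; rewrite !mxE.
- by have := congr1 (fun v : 'rV[F]_3 => v 0 o1) E; rewrite !mxE.
- by have := congr1 (fun v : 'rV[F]_3 => v 0 o2) E; rewrite !mxE.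
Qed.

Definition pcol (k : bool * F) : 'rV[F]_3 :=
  if k.1 then row3 1 k.2 0 else row3 0 k.2 1.

Lemma row3_101_neq_pcol l k : row3 1 0 1 != l *: pcol k.
Proof.
case: k => [[] a]; rewrite /pcol /= scale_row3; apply/eqP => /row3_inj [].
- by move=> _ _ /eqP; rewrite mulr0 oner_eq0.
- by move=> /eqP; rewrite mulr0 oner_eq0.
Qed.

Lemma pcol_same_kind_comb t a b (l m : F) :
  l *: pcol (t, a) + m *: pcol (t, b) =
  if t then row3 (l + m) (l * a + m * b) 0 else row3 0 (l * a + m * b) (l + m).
Proof.
by case: t; rewrite /pcol /= !scale_row3 add_row3 !mulr1 !mulr0 !addr0.
Qed.

Lemma pcol_cross_comb a b (l m : F) :
  l *: pcol (true, a) + m *: pcol (false, b) = row3 l (l * a + m * b) m.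
Proof. by rewrite /pcol /= !scale_row3 add_row3 !mulr1 !mulr0 addr0 add0r. Qed.

Lemma two_point_interpolation (c y a b : F) : a != b ->
  (c - (y - c * a) / (b - a)) * a + (y - c * a) / (b - a) * b = y.
Proof. by move=> ab; field; rewrite subr_eq0 eq_sym. Qed.

Variables (n : nat) (kind : 'I_n -> bool * F).

Definition pcmx : 'M[F]_(n, 3) := \matrix_(p < n) pcol (kind p).

Definition pcm_code : {vspace 'rV[F]_n} := lker (linfun (@mulmxr F 1 n 3 pcmx)).

Lemma mem_pcm_code c : (c \in pcm_code) = (c *m pcmx == 0).
Proof. by rewrite memv_ker lfunE. Qed.

Lemma subr_mem_pcm_code x e : (x - e \in pcm_code) = (e *m pcmx == x *m pcmx).
Proof. by rewrite mem_pcm_code mulmxBl subr_eq0 eq_sym. Qed.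

Definition unit_row (p : 'I_n) : 'rV[F]_n := delta_mx 0 p.

Lemma unit_row_mul_pcmx p : unit_row p *m pcmx = pcol (kind p).
Proof. by rewrite -rowE rowK. Qed.

Definition wt (e : 'rV[F]_n) : nat := #|[set i | e 0 i != 0]|.

Lemma hdist_wt x c : hdist x c = wt (x - c).
Proof. by apply: eq_card => i; rewrite !inE !mxE subr_eq0. Qed.

Lemma hdist_subr x e : hdist x (x - e) = wt e.
Proof. by rewrite hdist_wt opprB addrC subrK. Qed.

Lemma wt_scale_unit_row l p : (wt (l *: unit_row p) <= 1)%nat.
Proof.
rewrite /wt -[X in (_ <= X)%nat](cards1 p); apply: subset_leq_card.
apply/subsetP => i; rewrite !inE !mxE eqxx /=; apply: contraR => /negbTE ->; by rewrite mulr0.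
Qed.

Lemma wt_le1_syndrome (e : 'rV[F]_n) (p0 : 'I_n) :
  (wt e <= 1)%nat -> exists l p, e *m pcmx = l *: pcol (kind p).
Proof.
move=> /card_le1_eqP supp_e.
case: (pickP (fun i => e 0 i != 0)) => [p ep|e0]; last first.
  exists 0, p0; rewrite scale0r.
  have -> : e = 0 by apply/rowP => i; rewrite mxE; apply/eqP/negbFE/e0.
  by rewrite mul0mx.
exists (e 0 p), p; rewrite -unit_row_mul_pcmx scalemxAl; congr (_ *m _).
apply/rowP => i; rewrite !mxE eqxx /=.
have [->|nip] := eqVneq i p; first by rewrite mulr1.
rewrite mulr0; apply/eqP; apply: contraTT nip => ei.
by rewrite negbK; apply/eqP; apply: supp_e; rewrite inE.
Qed.

Definition wt2_vec l m p1 p2 : 'rV[F]_n := l *: unit_row p1 + m *: unit_row p2.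

Lemma wt2_vec_mul_pcmx l m p1 p2 :
  wt2_vec l m p1 p2 *m pcmx = l *: pcol (kind p1) + m *: pcol (kind p2).
Proof. by rewrite mulmxDl -!scalemxAl !unit_row_mul_pcmx. Qed.

Lemma support_wt2_vec l m p1 p2 : p1 != p2 -> l != 0 -> m != 0 ->
  [set i | wt2_vec l m p1 p2 0 i != 0] = [set p1; p2].
Proof.
move=> p12 l0 m0; apply/setP => i; rewrite !inE !mxE eqxx.
have [->|_] := eqVneq i p1; first by rewrite (negbTE p12) mulr1 mulr0 addr0.
by rewrite mulr0 add0r /=; case: (i == p2); rewrite ?mulr1 ?mulr0 ?eqxx.
Qed.

Lemma wt_wt2_vec l m p1 p2 : p1 != p2 -> l != 0 -> m != 0 ->
  wt (wt2_vec l m p1 p2) = 2%nat.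
Proof. by move=> p12 l0 m0; rewrite /wt support_wt2_vec // cards2 p12. Qed.

Lemma dist_code_le x c : c \in pcm_code -> (dist_code pcm_code x <= hdist x c)%nat.
Proof.
rewrite /dist_code => cC.
have : c \in index_enum 'rV[F]_n by rewrite mem_index_enum.
elim: (index_enum _) => [//|a r IH]; rewrite inE big_cons.
case/orP => [/eqP<-|cr]; first by rewrite cC geq_minl.
case: ifP => _; last exact: IH.
by rewrite (leq_trans (geq_minr _ _)) // IH.
Qed.

Lemma dist_code_ge x k : (k <= n)%nat ->
  (forall c, c \in pcm_code -> k <= hdist x c)%nat -> (k <= dist_code pcm_code x)%nat.
Proof.
move=> kn Hk; apply: (big_ind (fun v => k <= v)%nat) => // u v ku kv.
by rewrite leq_min ku kv.
Qed.

Lemma dist_code_le1 x l p : x *m pcmx = l *: pcol (kind p) ->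
  (dist_code pcm_code x <= 1)%nat.
Proof.
move=> Ex; apply: leq_trans (dist_code_le x (c := x - l *: unit_row p) _) _.
  by rewrite subr_mem_pcm_code -scalemxAl unit_row_mul_pcmx Ex.
by rewrite hdist_subr wt_scale_unit_row.
Qed.

Lemma dist_code_ge2 x : (2 <= n)%nat ->
  (forall l p, x *m pcmx != l *: pcol (kind p)) -> (2 <= dist_code pcm_code x)%nat.
Proof.
move=> n2 Nx; apply: dist_code_ge => // c cC; rewrite hdist_wt leqNgt ltnS.
apply/negP => /(wt_le1_syndrome (Ordinal n2)) [l [p E]].
move: (Nx l p); rewrite -E mulmxBl.
by move: cC; rewrite mem_pcm_code => /eqP ->; rewrite subr0 eqxx.
Qed.

(* Each unordered pair occurs at most once in [P], so distinct members of [P]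
   give distinct weight-2 vectors of syndrome [s]. *)
Definition pair_decomps (s : 'rV[F]_3) (P : {set 'I_n * 'I_n}) (L M : 'I_n * 'I_n -> F) :=
  {in P, forall pq, pq.1 != pq.2 /\ L pq *: pcol (kind pq.1) + M pq *: pcol (kind pq.2) = s}
  /\ {in P &, forall pq pq', pq.1 = pq'.2 -> pq.2 = pq'.1 -> pq = pq'}.

Definition cross_solutions (x y : F) : {set 'I_n * 'I_n} :=
  [set pq | [&& (kind pq.1).1, ~~ (kind pq.2).1 & x * (kind pq.1).2 + (kind pq.2).2 == y]].

Variable mu : nat.
Hypothesis mu_gt0 : (0 < mu)%nat.
Hypothesis cross_pairs : forall x y : F, x != 0 -> (mu <= #|cross_solutions x y|)%nat.
Hypothesis spread : forall t : bool, exists i0, (kind i0).1 = t /\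
  (mu <= #|[set i | ((kind i).1 == t) && ((kind i).2 != (kind i0).2)]|)%nat.

Definition many_pair_decomps s :=
  exists (P : {set 'I_n * 'I_n}) (L M : 'I_n * 'I_n -> F),
    (mu <= #|P|)%nat /\ pair_decomps s P L M.

Lemma same_kind_pair_decomps t c y :
  many_pair_decomps (if t then row3 c y 0 else row3 0 y c).
Proof.
have [i0 [ki0 HS]] := spread t; set S := [set i | _] in HS.
pose M pq := (y - c * (kind pq.1).2) / ((kind pq.2).2 - (kind pq.1).2).
exists ((fun i => (i0, i)) @: S), (fun pq => c - M pq), M; split.
  by rewrite card_imset // => i j [].
split.
- move=> pq /imsetP [i]; rewrite inE => /andP [/eqP ki ne] -> /=.
  split; first by apply: contraNneq ne => <-.
  rewrite [kind i0]surjective_pairing [kind i]surjective_pairing ki0 ki.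
  rewrite pcol_same_kind_comb subrK /M /= two_point_interpolation //.
  by rewrite eq_sym.
- move=> pq pq' /imsetP [i _ ->] /imsetP [j]; rewrite inE => /andP [_ ne] -> /= E.
  by rewrite -E eqxx in ne.
Qed.

Lemma syndrome_pair_decomps s : (forall l p, s != l *: pcol (kind p)) ->
  many_pair_decomps s.
Proof.
move=> Ns; rewrite (row3E s) in Ns *.
set x := s 0 o0; set y := s 0 o1; set z := s 0 o2.
have [-> | z0] := eqVneq z 0; first exact: (same_kind_pair_decomps true).
have [-> | x0] := eqVneq x 0; first exact: (same_kind_pair_decomps false).
have := @cross_pairs (x / z) (y / z) (mulf_neq0 x0 (invr_neq0 z0)).
set P := cross_solutions _ _ => HP; exists P, (fun _ => x), (fun _ => z); split => //.
split.
- move=> pq; rewrite inE => /and3P [A B /eqP E]; split.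
    by apply: contraNneq B => <-.
  rewrite [kind pq.1]surjective_pairing [kind pq.2]surjective_pairing.
  rewrite (negbTE B) A pcol_cross_comb -[y](divfK z0) -E; congr row3; field.
  exact: z0.
- move=> pq pq'; rewrite !inE => /and3P [A _ _] /and3P [_ B _] E _.
  by rewrite E (negbTE B) in A.
Qed.

Lemma card_wt2_syndrome s : (forall l p, s != l *: pcol (kind p)) ->
  (mu <= #|[set e | (wt e == 2%nat) && (e *m pcmx == s)]|)%nat.
Proof.
move=> Ns; have [P [L [M [HP [Hdec Hsw]]]]] := syndrome_pair_decomps Ns.
have nz pq : pq \in P -> [/\ pq.1 != pq.2, L pq != 0 & M pq != 0].
  move=> Pq; have [p12 E] := Hdec pq Pq; split => //; apply/eqP => E0.
  - by move: (Ns (M pq) pq.2); rewrite -E E0 scale0r add0r eqxx.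
  - by move: (Ns (L pq) pq.1); rewrite -E E0 scale0r addr0 eqxx.
pose e pq := wt2_vec (L pq) (M pq) pq.1 pq.2.
apply: leq_trans HP _; rewrite -(@card_in_imset _ _ e).
  apply: subset_leq_card; apply/subsetP => _ /imsetP [pq Pq ->].
  have [p12 l0 m0] := nz pq Pq; have [_ E] := Hdec pq Pq.
  by rewrite inE wt_wt2_vec // wt2_vec_mul_pcmx E !eqxx.
move=> [a b] [a' b'] Pq Pq' /= E.
have [ab l0 m0] := nz _ Pq; have [ab' l0' m0'] := nz _ Pq'.
have S := congr1 (fun v : 'rV[F]_n => [set i | v 0 i != 0]) E.
rewrite /= !support_wt2_vec // in S.
have := set21 a b; have := set22 a b; rewrite S !inE /=.
case/orP => /eqP eb /orP [] /eqP ea.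
- by rewrite ea eb eqxx in ab.
- exact: Hsw Pq Pq' ea eb.
- by rewrite ea eb.
- by rewrite ea eb eqxx in ab.
Qed.

Lemma card_codewords_at_dist2 x : (forall l p, x *m pcmx != l *: pcol (kind p)) ->
  (mu <= #|[set c | (c \in pcm_code) && (hdist x c == 2%nat)]|)%nat.
Proof.
move=> Nx; apply: leq_trans (card_wt2_syndrome Nx) _.
have sub_inj : injective (fun e => x - e) by move=> e e' /addrI /oppr_inj.
rewrite -(card_imset _ sub_inj); apply: subset_leq_card.
apply/subsetP => c /imsetP [e]; rewrite inE => /andP [/eqP we /eqP Ee] ->.
by rewrite inE subr_mem_pcm_code Ee hdist_subr we !eqxx.
Qed.

Lemma pcol_multipleP s :
  (exists l p, s = l *: pcol (kind p)) \/ (forall l p, s != l *: pcol (kind p)).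
Proof.
have [/existsP [l /existsP [p /eqP Es]] | Ns] := boolP [exists l, exists p, s == l *: pcol (kind p)].
  by left; exists l, p.
right=> l p; apply: contraNN Ns => Es.
by apply/existsP; exists l; apply/existsP; exists p.
Qed.

Lemma syndrome_surj (s : 'rV[F]_3) : exists e : 'rV[F]_n, e *m pcmx = s.
Proof.
have [[l [p Es]] | Ns] := pcol_multipleP s.
  by exists (l *: unit_row p); rewrite -scalemxAl unit_row_mul_pcmx Es.
have := card_wt2_syndrome Ns => /(leq_trans mu_gt0) /card_gt0P [e].
by rewrite inE => /andP [_ /eqP Ee]; exists e.
Qed.

Lemma dist_code_le2 x : (dist_code pcm_code x <= 2)%nat.
Proof.
have [[l [p Ex]] | Nx] := pcol_multipleP (x *m pcmx).
  exact: leq_trans (dist_code_le1 Ex) _.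
have := card_codewords_at_dist2 Nx => /(leq_trans mu_gt0) /card_gt0P [c].
by rewrite inE => /andP [cC /eqP <-]; exact: dist_code_le.
Qed.

Lemma dim_pcm_code : (3 <= n)%nat -> has_codim pcm_code 3.
Proof.
move=> n3; split => //.
have img_full : (limg (linfun (@mulmxr F 1 n 3 pcmx)) = fullv)%VS.
  apply/vspaceP => w; rewrite memvf; have [e <-] := syndrome_surj w.
  by have := memv_img (linfun (@mulmxr F 1 n 3 pcmx)) (memvf e); rewrite lfunE.
have := limg_ker_dim (linfun (@mulmxr F 1 n 3 pcmx)) fullv.
rewrite capfv img_full !dimvf !dim_matrix !mul1r.
move=> E; have : (\dim pcm_code + 3 = n)%nat := E; lia.
Qed.

Lemma cov_radius_pcm_code : (2 <= n)%nat -> cov_radius pcm_code = 2%nat.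
Proof.
move=> n2; apply/eqP; rewrite eqn_leq; apply/andP; split.
  by apply/bigmax_leqP => x _; exact: dist_code_le2.
have [e Ee] := syndrome_surj (row3 1 0 1).
apply: leq_trans (leq_bigmax e).
by apply: dist_code_ge2 => // l p; rewrite Ee row3_101_neq_pcol.
Qed.

Theorem pcm_code_MCF : (3 <= n)%nat -> has_codim pcm_code 3 /\ is_MCF pcm_code 2 mu.
Proof.
move=> n3; split; first exact: dim_pcm_code.
split; first exact: cov_radius_pcm_code (ltnW n3).
move=> x dx; apply: card_codewords_at_dist2 => l p; apply/eqP => Ex.
by have := dist_code_le1 Ex; rewrite dx.
Qed.

End ParityCheck.

Section SumIndexedColumns.
Import GRing.Theory.
Local Open Scope ring_scope.

Variables (F : finFieldType) (TA TB : finType) (fa : TA -> F) (fb : TB -> F).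
Local Notation T := (TA + TB)%type.

Definition sum_kind (p : 'I_#|{: T}|) : bool * F :=
  match enum_val p with inl i => (true, fa i) | inr j => (false, fb j) end.

Lemma sum_kind_inl i : sum_kind (enum_rank (inl i : T)) = (true, fa i).
Proof. by rewrite /sum_kind enum_rankK. Qed.

Lemma sum_kind_inr j : sum_kind (enum_rank (inr j : T)) = (false, fb j).
Proof. by rewrite /sum_kind enum_rankK. Qed.

Definition affine_solutions (x y : F) : {set TA * TB} :=
  [set ij | x * fa ij.1 + fb ij.2 == y].

Variable mu : nat.
Hypothesis mu_gt0 : (0 < mu)%nat.
Hypothesis affine_solutions_ge : forall x y : F, x != 0 ->
  (mu <= #|affine_solutions x y|)%nat.
Hypothesis spreadA : exists i0 : TA, (mu <= #|[set i | fa i != fa i0]|)%nat.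
Hypothesis spreadB : exists j0 : TB, (mu <= #|[set j | fb j != fb j0]|)%nat.

Lemma sum_kind_cross x y : x != 0 -> (mu <= #|cross_solutions sum_kind x y|)%nat.
Proof.
move=> x0; apply: leq_trans (affine_solutions_ge y x0) _.
pose g (ij : TA * TB) := (enum_rank (inl ij.1 : T), enum_rank (inr ij.2 : T)).
rewrite -(@card_imset _ _ g); last first.
  by move=> [i j] [i' j'] [] /enum_rank_inj [->] /enum_rank_inj [->].
apply: subset_leq_card; apply/subsetP => pq /imsetP [[i j]]; rewrite !inE /= => E ->.
by rewrite /g /= sum_kind_inl sum_kind_inr.
Qed.

Lemma sum_kind_spread t : exists i0, (sum_kind i0).1 = t /\
  (mu <= #|[set i | ((sum_kind i).1 == t) && ((sum_kind i).2 != (sum_kind i0).2)]|)%nat.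
Proof.
case: t.
- have [i0 Hc] := spreadA; exists (enum_rank (inl i0 : T)); rewrite sum_kind_inl.
  split => //; apply: leq_trans Hc _.
  rewrite -(@card_imset _ _ (fun i => enum_rank (inl i : T))); last first.
    by move=> i i' /enum_rank_inj [].
  apply: subset_leq_card; apply/subsetP => p /imsetP [i]; rewrite !inE => E ->.
  by rewrite sum_kind_inl.
- have [j0 Hc] := spreadB; exists (enum_rank (inr j0 : T)); rewrite sum_kind_inr.
  split => //; apply: leq_trans Hc _.
  rewrite -(@card_imset _ _ (fun j => enum_rank (inr j : T))); last first.
    by move=> j j' /enum_rank_inj [].
  apply: subset_leq_card; apply/subsetP => p /imsetP [j]; rewrite !inE => E ->.
  by rewrite sum_kind_inr.
Qed.

Lemma ell_mu_le_of_columns (b : R) :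
  (3 <= #|TA| + #|TB|)%nat -> (INR (#|TA| + #|TB|) <= b)%R -> ell_mu_le F mu 2 3 b.
Proof.
rewrite -card_sum => n3 nb; exists #|{: T}|; split => //.
exists (pcm_code sum_kind); apply: pcm_code_MCF => //.
- exact: sum_kind_cross.
- exact: sum_kind_spread.
Qed.

End SumIndexedColumns.

Lemma leq_card_bigcup (T I : finType) (P : pred I) (A : I -> {set T}) :
  (#|\bigcup_(i | P i) A i| <= \sum_(i | P i) #|A i|)%nat.
Proof.
elim/big_rec2: _ => [|i m U _ IH]; first by rewrite cards0.
by apply: leq_trans (leq_card_setU _ _).1 _; rewrite leq_add2l.
Qed.

Lemma exists_notin_set (T : finType) (B : {set T}) : (#|B| < #|T|)%nat -> exists x, x \notin B.
Proof.
move=> B_lt; have : ~~ ([set: T] \subset B).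
  by apply: contraTN B_lt => /subset_leq_card; rewrite cardsT -leqNgt.
by case/subsetPn => x _ xB; exists x.
Qed.

Section HittingFamilies.
Import GRing.Theory.
Local Open Scope ring_scope.

Variable F : finFieldType.
Local Notation q := #|F|.

Lemma card_ffun_avoiding b (S : {set 'I_b}) (X : {set F}) :
  #|[set r : {ffun 'I_b -> F} | [forall k, (k \notin S) ==> (r k \notin X)]]| =
  (expn q #|S| * expn (q - #|X|) (b - #|S|))%nat.
Proof.
pose G (k : 'I_b) := if k \in S then (predT : pred F) else [pred v | v \notin X].
rewrite (@eq_card _ _ (finfun.family G)); last first.
  move=> r; rewrite inE; apply/forallP/familyP => H k; move: (H k); rewrite /G;
  by case: (k \in S).
rewrite card_family foldrE big_map big_enum /= (bigID (mem S)) /=.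
rewrite (eq_bigr (fun _ => q)); last by move=> k kS; rewrite /G kS.
rewrite [X in (_ * X)%nat](eq_bigr (fun _ => (q - #|X|)%nat)); last first.
  move=> k kS; rewrite /G (negbTE kS) -(cardsC X) addKn.
  by apply: eq_card => v; rewrite !inE.
rewrite !prod_nat_const; congr (expn _ _ * expn _ _)%nat.
rewrite -[X in (_ = X - _)%nat](card_ord b) -(cardsC S) addKn.
by apply: eq_card => k; rewrite !inE.
Qed.

Variables (a : nat) (A0 : 'I_a -> F).
Hypothesis A0_inj : injective A0.

Definition target_set (x y : F) : {set F} := [set y - x * A0 i | i : 'I_a].

Lemma card_target_set x y : x != 0 -> #|target_set x y| = a.
Proof.
move=> x0; rewrite card_imset ?card_ord // => i j /= E.
by apply: A0_inj; apply: (mulfI x0); apply: oppr_inj; exact: (addrI y).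
Qed.

Lemma sum_over_pairs_le (P : pred (F * F)) (c : nat) : (\sum_(xy | P xy) c <= q * q * c)%nat.
Proof. by rewrite sum_nat_const leq_mul2r -card_prod max_card orbT. Qed.

Lemma exists_ffun_hitting b : (q * q * expn (q - a) b < expn q b)%nat ->
  exists r : {ffun 'I_b -> F}, forall x y, x != 0 -> exists j, r j \in target_set x y.
Proof.
move=> count_lt.
pose Bad := \bigcup_(xy : F * F | xy.1 != 0)
  [set r : {ffun 'I_b -> F} |
    [forall k, (k \notin set0) ==> (r k \notin target_set xy.1 xy.2)]].
have [r rB] : exists r, r \notin Bad.
  apply: exists_notin_set; rewrite card_ffun card_ord.
  apply: leq_ltn_trans count_lt; apply: leq_trans (leq_card_bigcup _ _) _.
  apply: leq_trans (sum_over_pairs_le _ _); apply: leq_sum => xy x0.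
  by rewrite card_ffun_avoiding cards0 card_target_set // expn0 mul1n subn0.
exists r => x y x0; apply/existsP; apply: contraR rB => /existsPn miss.
apply/bigcupP; exists (x, y) => //; rewrite inE; apply/forallP => k.
by rewrite inE; exact: miss.
Qed.

Lemma exists_ffun_hitting_twice b :
  (q * q * (b.+1 * (q * expn (q - a) b)) < expn q b.+1)%nat ->
  exists r : {ffun 'I_b.+1 -> F},
    forall x y, x != 0 -> (1 < #|[set j | r j \in target_set x y]|)%nat.
Proof.
move=> count_lt.
pose Bad := \bigcup_(xy : F * F | xy.1 != 0) \bigcup_(j : 'I_b.+1)
  [set r : {ffun 'I_b.+1 -> F} |
    [forall k, (k \notin [set j]) ==> (r k \notin target_set xy.1 xy.2)]].
have [r rB] : exists r, r \notin Bad.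
  apply: exists_notin_set; rewrite card_ffun card_ord.
  apply: leq_ltn_trans count_lt; apply: leq_trans (leq_card_bigcup _ _) _.
  apply: leq_trans (sum_over_pairs_le _ _); apply: leq_sum => xy x0.
  apply: leq_trans (leq_card_bigcup _ _) _.
  rewrite (eq_bigr (fun _ => (q * expn (q - a) b)%nat)); last first.
    by move=> j _; rewrite card_ffun_avoiding cards1 card_target_set // expn1 subn1.
  by rewrite sum_nat_const card_ord.
exists r => x y x0; rewrite ltnNge; apply: contra rB => /card_le1_eqP hits_le1.
apply/bigcupP; exists (x, y) => //; apply/bigcupP.
have [j jS | none] := pickP (mem [set j | r j \in target_set x y]).
  exists j => //; rewrite inE; apply/forallP => k; rewrite inE; apply/implyP => kj.
  by apply: contra kj => rk; apply/eqP; apply: hits_le1; rewrite // inE.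
exists ord0 => //; rewrite inE; apply/forallP => k; apply/implyP => _.
by move: (none k); rewrite /= inE => ->.
Qed.

End HittingFamilies.

Section Construction.
Import GRing.Theory.
Local Open Scope ring_scope.

Variable F : finFieldType.
Local Notation q := #|F|.

Definition field_elt k (kq : (k <= q)%nat) (i : 'I_k) : F := enum_val (widen_ord kq i).

Lemma field_elt_inj k kq : injective (@field_elt k kq).
Proof. by move=> i j /enum_val_inj [] /val_inj. Qed.

Variables (mu kA a b : nat) (aq : (a <= q)%nat) (muq : (mu.+1 <= q)%nat).
Variable r : {ffun 'I_b -> F}.

Definition colsA (p : 'I_kA * 'I_a) : F := field_elt aq p.2.
Definition colsB (j : 'I_mu.+1 + 'I_b) : F :=
  match j with inl j => field_elt muq j | inr j => r j end.

Hypothesis mu_gt0 : (0 < mu)%nat.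
Hypothesis mu_le_spreadA : (mu <= kA * (a - 1))%nat.

Lemma spread_colsA : exists i0, (mu <= #|[set i | colsA i != colsA i0]|)%nat.
Proof.
have [kA0 a0] : (0 < kA)%nat /\ (0 < a)%nat by move: mu_gt0 mu_le_spreadA; nia.
exists (Ordinal kA0, Ordinal a0); apply: leq_trans mu_le_spreadA _.
have -> : (kA * (a - 1) = #|setX [set: 'I_kA] [set~ Ordinal a0]|)%nat.
  by rewrite cardsX cardsT cardsC1 !card_ord subn1.
apply: subset_leq_card; apply/subsetP => [[k i]]; rewrite !inE /= /colsA /=.
by apply: contra => /eqP /field_elt_inj ->.
Qed.

Lemma spread_colsB : exists j0, (mu <= #|[set j | colsB j != colsB j0]|)%nat.
Proof.
exists (inl ord0); rewrite -[X in (X <= _)%nat](card_ord mu).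
rewrite -(@card_imset _ _ (fun j : 'I_mu => inl (lift ord0 j) : 'I_mu.+1 + 'I_b)); last first.
  by move=> i j; case; rewrite !add0n => /val_inj.
apply: subset_leq_card; apply/subsetP => p /imsetP [j _ ->]; rewrite inE /=.
by apply/eqP => /field_elt_inj /eqP; rewrite eq_sym (negbTE (neq_lift _ _)).
Qed.

Lemma affine_solutions_of_hit : (mu <= kA)%nat ->
  (forall x y, x != 0 -> exists j, r j \in target_set (field_elt aq) x y) ->
  forall x y, x != 0 -> (mu <= #|affine_solutions colsA colsB x y|)%nat.
Proof.
move=> mu_kA hit x y x0; have [j /imsetP [i _ rj]] := hit x y x0.
apply: leq_trans mu_kA _; rewrite -[X in (X <= _)%nat](card_ord kA).
rewrite -(@card_imset _ _ (fun k => ((k, i), inr j) : ('I_kA * 'I_a) * ('I_mu.+1 + 'I_b)));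
  last by move=> k k' [].
apply: subset_leq_card; apply/subsetP => p /imsetP [k _ ->].
by rewrite inE /= /colsA /= rj addrC subrK.
Qed.

Lemma affine_solutions_of_double_hit : (mu <= kA * 2)%nat ->
  (forall x y, x != 0 -> (1 < #|[set j | r j \in target_set (field_elt aq) x y]|)%nat) ->
  forall x y, x != 0 -> (mu <= #|affine_solutions colsA colsB x y|)%nat.
Proof.
move=> mu_kA hit x y x0; have /card_gt1P [j1 [j2 [j1S j2S j12]]] := hit x y x0.
move: j1S j2S; rewrite !inE => /imsetP [i1 _ rj1] /imsetP [i2 _ rj2].
apply: leq_trans mu_kA _.
have -> : (kA * 2 = #|{: 'I_kA * bool}|)%nat by rewrite card_prod card_ord card_bool.
pose g (kc : 'I_kA * bool) := ((kc.1, if kc.2 then i1 else i2), inr (if kc.2 then j1 else j2))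
  : ('I_kA * 'I_a) * ('I_mu.+1 + 'I_b).
rewrite -(@card_imset _ _ g); last first.
  move=> [k c] [k' c'] [] -> _ E; congr (_, _).
  by case: c c' E => [] [] //= E; move: j12; rewrite E eqxx.
apply: subset_leq_card; apply/subsetP => p /imsetP [[k c] _ ->].
by rewrite inE /= /colsA /=; case: c; rewrite /= ?rj1 ?rj2 addrC subrK.
Qed.

Lemma ell_mu_le_construction (B : R) :
  (forall x y, x != 0 -> (mu <= #|affine_solutions colsA colsB x y|)%nat) ->
  (INR (kA * a + (mu.+1 + b)) <= B)%R -> ell_mu_le F mu 2 3 B.
Proof.
move=> hits len_le; apply: (ell_mu_le_of_columns mu_gt0 hits).
- exact: spread_colsA.
- exact: spread_colsB.
- by rewrite !card_prod !card_sum !card_ord; move: mu_gt0 mu_le_spreadA; nia.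
- by rewrite !card_prod !card_sum !card_ord.
Qed.

End Construction.

Section HitConstructions.
Variables (F : finFieldType) (mu kA a : nat).
Local Notation q := #|F|.
Hypotheses (aq : (a <= q)%nat) (muq : (mu.+1 <= q)%nat).
Hypotheses (mu_gt0 : (0 < mu)%nat) (mu_le_spreadA : (mu <= kA * (a - 1))%nat).

Lemma ell_mu_le_hit b : (mu <= kA)%nat ->
  (q * q * expn (q - a) b < expn q b)%nat ->
  ell_mu_le F mu 2 3 (INR (kA * a + (mu.+1 + b))).
Proof.
move=> mu_kA count_lt.
have [r hit] := exists_ffun_hitting (@field_elt_inj F a aq) count_lt.
apply: (@ell_mu_le_construction F mu kA a _ aq muq r mu_gt0 mu_le_spreadA _ _ (Rle_refl _)).
exact: affine_solutions_of_hit.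
Qed.

Lemma ell_mu_le_double_hit b : (mu <= kA * 2)%nat ->
  (q * q * (b.+1 * (q * expn (q - a) b)) < expn q b.+1)%nat ->
  ell_mu_le F mu 2 3 (INR (kA * a + (mu.+1 + b.+1))).
Proof.
move=> mu_kA count_lt.
have [r hit] := exists_ffun_hitting_twice (@field_elt_inj F a aq) count_lt.
apply: (@ell_mu_le_construction F mu kA a _ aq muq r mu_gt0 mu_le_spreadA _ _ (Rle_refl _)).
exact: affine_solutions_of_double_hit.
Qed.

End HitConstructions.

Section RealEstimates.
Local Open Scope R_scope.

Lemma INR_addn m n : INR (m + n)%nat = INR m + INR n.
Proof. by rewrite -plusE plus_INR. Qed.

Lemma INR_muln m n : INR (m * n)%nat = INR m * INR n.
Proof. by rewrite -multE mult_INR. Qed.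

Lemma INR_subn m n : (n <= m)%nat -> INR (m - n)%nat = INR m - INR n.
Proof. by move=> /leP nm; rewrite -minusE minus_INR. Qed.

Lemma INR_expn m n : INR (expn m n) = INR m ^ n.
Proof. by elim: n => [|n IH]; rewrite ?expn0 // expnS INR_muln IH. Qed.

Lemma INR_addn1 n : INR (n + 1)%nat = INR n + 1.
Proof. by rewrite INR_addn. Qed.

Lemma IZR_le_INR (k n : nat) : (k <= n)%nat -> IZR (Z.of_nat k) <= INR n.
Proof. by move=> /leP kn; rewrite -INR_IZR_INZ; apply: le_INR. Qed.

Lemma exists_nat_between (x : R) : 0 <= x -> exists n : nat, x < INR n <= x + 1.
Proof.
move=> x0; have [up_gt up_le] := archimed x.
have up0 : (0 < up x)%Z by apply: lt_IZR; lra.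
exists (Z.to_nat (up x)); rewrite INR_IZR_INZ Znat.Z2Nat.id; [lra | lia].
Qed.

Lemma exp_pow (x : R) (k : nat) : exp x ^ k = exp (INR k * x).
Proof.
elim: k => [|k IH]; first by rewrite /= Rmult_0_l exp_0.
change (exp x * exp x ^ k = exp (INR k.+1 * x)).
by rewrite IH -exp_plus S_INR; congr exp; ring.
Qed.

Lemma ln_le_compat x y : 0 < x -> x <= y -> ln x <= ln y.
Proof. by move=> x0 [xy | <-]; [left; apply: ln_increasing | right]. Qed.

Lemma ln_le_sqrt x : 0 < x -> ln x <= sqrt x.
Proof.
move=> x0; set y := sqrt x; have y0 : 0 < y by apply: sqrt_lt_R0.
rewrite -[x](sqrt_sqrt x) ?ln_mult -/y; try lra.
suff : ln y <= y / 2 by lra.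
rewrite -[X in _ <= X](ln_exp (y / 2)); apply: ln_le_compat => //.
have e1 : 2 <= exp 1 by have := exp_ineq1_le 1; lra.
have et : y / 2 <= exp (y / 2 - 1) by have := exp_ineq1_le (y / 2 - 1); lra.
have -> : exp (y / 2) = exp 1 * exp (y / 2 - 1) by rewrite -exp_plus; congr exp; ring.
nra.
Qed.

Lemma pow_decay_lt1 (Q A : R) (m k : nat) : 0 < Q -> 0 <= A <= Q ->
  INR m * Q * ln Q < A * INR k -> Q ^ m * ((Q - A) / Q) ^ k < 1.
Proof.
move=> Q0 AQ mk.
have -> : Q ^ m = exp (INR m * ln Q) by rewrite -exp_pow exp_ln.
have decay : ((Q - A) / Q) ^ k <= exp (INR k * (- (A / Q))).
  rewrite -exp_pow; apply: pow_incr; split.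
    by apply: Rmult_le_pos; [lra | left; apply: Rinv_0_lt_compat].
  have -> : (Q - A) / Q = 1 + - (A / Q) by field; lra.
  exact: exp_ineq1_le.
apply: Rle_lt_trans (Rmult_le_compat_l _ _ _ (Rlt_le _ _ (exp_pos _)) decay) _.
rewrite -exp_plus -exp_0; apply: exp_increasing.
have -> : INR k * - (A / Q) = - (A * INR k) / Q by field; lra.
apply: (Rmult_lt_reg_r Q) => //.
have -> : (INR m * ln Q + - (A * INR k) / Q) * Q = INR m * Q * ln Q - A * INR k.
  by field; lra.
lra.
Qed.

Lemma pow_decay_count (Q A : R) (m k : nat) : 0 < Q -> 0 <= A <= Q ->
  INR m * Q * ln Q < A * INR k -> Q ^ m * (Q - A) ^ k < Q ^ k.
Proof.
move=> Q0 AQ mk; have Qk := pow_lt _ k Q0.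
have -> : (Q - A) ^ k = ((Q - A) / Q) ^ k * Q ^ k.
  by rewrite -Rpow_mult_distr; congr pow; field; lra.
rewrite -Rmult_assoc -[X in _ < X]Rmult_1_l; apply: Rmult_lt_compat_r => //.
exact: pow_decay_lt1.
Qed.

Lemma xlnx_le_succ (Q : R) : 1 <= Q -> Q * ln Q <= (Q + 1) * ln (Q + 1).
Proof.
move=> Q1; have lnQ0 : 0 <= ln Q by rewrite -ln_1; apply: ln_le_compat; lra.
have : ln Q <= ln (Q + 1) by apply: ln_le_compat; lra.
nra.
Qed.

Lemma hit_count_lt (q a b : nat) : (0 < q)%nat -> (a <= q)%nat ->
  2 * ((INR q + 1) * ln (INR q + 1)) < INR a * INR b ->
  (q * q * expn (q - a) b < expn q b)%nat.
Proof.
move=> q0 aq ab; apply/ltP/INR_lt; rewrite !INR_muln !INR_expn INR_subn //.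
have Q1 : 1 <= INR q by apply: (le_INR 1); apply/leP.
have aQ : 0 <= INR a <= INR q by split; [apply: pos_INR | apply: le_INR; apply/leP].
have := xlnx_le_succ Q1 => lnQ.
have := @pow_decay_count (INR q) (INR a) 2 b ltac:(lra) aQ ltac:(simpl; lra).
by rewrite /= Rmult_1_r.
Qed.

Lemma double_hit_count_lt (q a b : nat) : (0 < q)%nat -> (a <= q)%nat -> (b < q)%nat ->
  3 * ((INR q + 1) * ln (INR q + 1)) < INR a * INR b ->
  (q * q * (b.+1 * (q * expn (q - a) b)) < expn q b.+1)%nat.
Proof.
move=> q0 aq bq ab; apply/ltP/INR_lt; rewrite !INR_muln !INR_expn INR_subn //.
have Q1 : 1 <= INR q by apply: (le_INR 1); apply/leP.
have aQ : 0 <= INR a <= INR q by split; [apply: pos_INR | apply: le_INR; apply/leP].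
have bQ : INR b.+1 <= INR q by apply: le_INR; apply/leP.
have := xlnx_le_succ Q1 => lnQ.
have := @pow_decay_count (INR q) (INR a) 3 b ltac:(lra) aQ ltac:(simpl; lra).
have := pow_le (INR q - INR a) b ltac:(lra).
set P := (INR q - INR a) ^ b => P0.
rewrite (_ : INR q ^ 3 = INR q * INR q * INR q); last by ring.
change (INR q ^ b.+1) with (INR q * INR q ^ b) => decay.
apply: Rle_lt_trans (_ : INR q * (INR q * INR q * INR q * P) < _); last first.
  by apply: Rmult_lt_compat_l; lra.
have : INR b.+1 * (INR q * P) <= INR q * (INR q * P) by apply: Rmult_le_compat_r; nra.
nra.
Qed.

Notation root_qlnq q := (sqrt (INR (q + 1) * ln (INR (q + 1)))).

Lemma root_qlnq_sq q : root_qlnq q * root_qlnq q = (INR q + 1) * ln (INR q + 1).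
Proof.
rewrite INR_addn1; apply: sqrt_sqrt; have := pos_INR q => q0.
have : 0 <= ln (INR q + 1) by rewrite -ln_1; apply: ln_le_compat; lra.
nra.
Qed.

Lemma root_qlnq_ge0 q : 0 <= root_qlnq q.
Proof. exact: sqrt_pos. Qed.

Lemma le_root_qlnq q c : 0 <= c -> c * c <= (INR q + 1) * ln (INR q + 1) -> c <= root_qlnq q.
Proof. by rewrite -root_qlnq_sq => c0 cs; have := root_qlnq_ge0 q; nra. Qed.

Lemma le_root_qlnq_large q c : 27 <= INR q -> 0 <= c -> c * c <= 3 * (INR q + 1) ->
  c <= root_qlnq q.
Proof.
move=> Q27 c0 cc; apply: le_root_qlnq => //.
suff : 3 <= ln (INR q + 1) by nra.
rewrite -(ln_exp 3); apply: ln_le_compat; first exact: exp_pos.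
have -> : 3 = 1 + 1 + 1 by ring.
by rewrite !exp_plus; have := exp_le_3; have := exp_pos 1; nra.
Qed.

Lemma le_ln_succ_small (n : nat) : (3 <= n)%nat -> (n < 7)%nat -> INR n <= 4 * ln (INR n + 1).
Proof.
move=> n3 n6; have n1 : 0 < INR n + 1 by have := pos_INR n; lra.
have -> : 4 * ln (INR n + 1) = ln ((INR n + 1) ^ 4) by rewrite ln_pow //; simpl; lra.
rewrite -{1}(ln_exp (INR n)); apply: ln_le_compat; first exact: exp_pos.
have -> : exp (INR n) = exp 1 ^ n by rewrite exp_pow Rmult_1_r.
apply: Rle_trans (_ : 3 ^ n <= _).
  by apply: pow_incr; split; [left; exact: exp_pos | exact: exp_le_3].
by case: n n3 n6 {n1} => [|[|[|[|[|[|[|n]]]]]]] //= _ _; lra.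
Qed.

Lemma le_twice_root_qlnq_small q : (3 <= q)%nat -> (q < 7)%nat -> INR q <= 2 * root_qlnq q.
Proof.
move=> q3 q6; have := le_ln_succ_small q3 q6; have := pos_INR q => q0 qln.
have s0 := root_qlnq_ge0 q; have ss := root_qlnq_sq q; nra.
Qed.

Lemma root_qlnq_ge_342 q : (7 <= q)%nat -> 3.42 <= root_qlnq q.
Proof.
move=> q7; apply: le_root_qlnq; first lra.
have Q7 : 7 <= INR q by have := IZR_le_INR q7.
suff : 1.5 <= ln (INR q + 1) by nra.
rewrite -(ln_exp 1.5); apply: ln_le_compat; first exact: exp_pos.
have : exp 1.5 * exp 1.5 <= 27.
  rewrite -exp_plus (_ : 1.5 + 1.5 = 1 + 1 + 1); last by lra.
  by rewrite !exp_plus; have := exp_le_3; have := exp_pos 1; nra.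
have := exp_pos 1.5; nra.
Qed.

Lemma root_qlnq_lt_q q : (97 <= q)%nat -> 2.4 * root_qlnq q + 2 <= INR q.
Proof.
move=> q97; have Q97 : 97 <= INR q by have := IZR_le_INR q97.
set s := root_qlnq q; have s0 : 0 <= s := root_qlnq_ge0 q; have ss := root_qlnq_sq q.
set t := sqrt (INR q + 1); have t0 : 0 <= t := sqrt_pos _.
have tt : t * t = INR q + 1 by apply: sqrt_sqrt; lra.
have lnt : ln (INR q + 1) <= t by apply: ln_le_sqrt; lra.
(* [(q + 1) ln (q + 1) <= (q + 1)^(3/2)] is then dominated by [((q - 2) / 2.4)^2]. *)
have st : s * s <= (INR q + 1) * t by rewrite ss; apply: Rmult_le_compat_l; lra.
have t9 : 9 <= t by nra.
have : 5.76 * (s * s) <= (t * t - 3) * (t * t - 3).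
  suff : t * t * (t * t - 5.76 * t - 6) + 9 >= 0 by nra.
  nra.
nra.
Qed.

Lemma ell_mu_le_mono (F : finFieldType) mu Rad r b b' :
  ell_mu_le F mu Rad r b -> b <= b' -> ell_mu_le F mu Rad r b'.
Proof. by move=> [n [nb Cn]] bb'; exists n; split => //; lra. Qed.

Section HitBounds.
Variables (F : finFieldType) (mu : nat).
Local Notation q := #|F|.
Hypotheses (mu_gt0 : (0 < mu)%nat) (muq : (mu.+1 <= q)%nat).

Lemma ell_mu_le_full_field : ell_mu_le F mu 2 3 (INR mu * INR q + INR mu + 2).
Proof.
have spread : (mu <= mu * (q - 1))%nat by move: mu_gt0 muq; nia.
have count : (q * q * expn (q - q) 1 < expn q 1)%nat.
  by rewrite subnn expn1 muln0 expn1 (leq_trans mu_gt0 (ltnW muq)).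
apply: ell_mu_le_mono (ell_mu_le_hit (leqnn q) muq mu_gt0 spread (leqnn mu) count) _.
by rewrite !INR_addn INR_muln S_INR INR_1; lra.
Qed.

Lemma ell_mu_le_sparse a : (2 <= a <= q)%nat ->
  2 * ((INR q + 1) * ln (INR q + 1)) < INR a * INR a ->
  ell_mu_le F mu 2 3 ((INR mu + 1) * INR a + INR mu + 1).
Proof.
move=> /andP [a2 aq] aa.
have spread : (mu <= mu * (a - 1))%nat by move: mu_gt0 a2; nia.
have count := hit_count_lt (leq_trans (ltnW a2) aq) aq aa.
apply: ell_mu_le_mono (ell_mu_le_hit aq muq mu_gt0 spread (leqnn mu) count) _.
by rewrite !INR_addn INR_muln S_INR; lra.
Qed.

Lemma ell_mu_le_hit_bound : (3 <= q)%nat -> ell_mu_le F mu 2 3 (mcf_bound (INR (mu + 1)) q).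
Proof.
move=> q3; rewrite /mcf_bound INR_addn1.
set s := root_qlnq q; have s0 : 0 <= s := root_qlnq_ge0 q.
have ss : s * s = (INR q + 1) * ln (INR q + 1) := root_qlnq_sq q.
have muQ : INR mu + 1 <= INR q by rewrite -S_INR; apply: le_INR; apply/leP.
have mu0 := pos_INR mu.
have [q_le | q_gt] := Rle_lt_dec (INR q) (2 * s).
  by apply: ell_mu_le_mono ell_mu_le_full_field _; nra.
have q7 : (7 <= q)%nat.
  rewrite leqNgt; apply/negP => q6.
  by have := le_twice_root_qlnq_small q3 q6; rewrite -/s; lra.
have s342 : 3.42 <= s := root_qlnq_ge_342 q7.
have [a [a_gt a_le]] := @exists_nat_between (1.415 * s) ltac:(lra).
have a2q : (2 <= a <= q)%nat.
  by apply/andP; split; apply/leP/INR_le; [simpl; lra | lra].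
apply: ell_mu_le_mono (ell_mu_le_sparse a2q _) _; first by rewrite -ss; nra.
nra.
Qed.

End HitBounds.

Lemma ell_mu_le_double_hit_bound (F : finFieldType) (mu kA : nat) :
  (97 <= #|F|)%nat -> (0 < mu)%nat -> (mu <= 4)%nat -> (mu <= kA * 2)%nat ->
  ell_mu_le F mu 2 3
    (INR kA * (1.25 * root_qlnq #|F| + 1) + INR mu + 2.4 * root_qlnq #|F| + 3).
Proof.
move=> q97 mu0 mu4 mukA; set q := #|F| in q97 *; set s := root_qlnq q.
have ss : s * s = (INR q + 1) * ln (INR q + 1) := root_qlnq_sq q.
have sq : 2.4 * s + 2 <= INR q := root_qlnq_lt_q q97.
have Q97 : 97 <= INR q := IZR_le_INR q97.
have s4 : 4 <= s by apply: le_root_qlnq_large; lra.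
have [a [a_gt a_le]] := @exists_nat_between (1.25 * s) ltac:(lra).
have [b [b_gt b_le]] := @exists_nat_between (2.4 * s) ltac:(lra).
have aq : (a <= q)%nat by apply/leP/INR_le; lra.
have bq : (b < q)%nat by apply/ltP/INR_lt; lra.
have a4 : (4 < a)%nat by apply/ltP/INR_lt; simpl; lra.
have muq : (mu.+1 <= q)%nat by move: mu4 q97; lia.
have spread : (mu <= kA * (a - 1))%nat by move: mukA mu4 a4; nia.
have count := double_hit_count_lt (leq_trans (isT : 0 < 97)%nat q97) aq bq
  ltac:(rewrite -ss; nra).
apply: ell_mu_le_mono (ell_mu_le_double_hit aq muq mu0 spread mukA count) _.
rewrite !INR_addn INR_muln !S_INR.
have : INR kA * INR a <= INR kA * (1.25 * s + 1).
  by apply: Rmult_le_compat_l; [exact: pos_INR | lra].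
lra.
Qed.

Lemma mcf_bound_le D D' q : D <= D' -> mcf_bound D q <= mcf_bound D' q.
Proof. by rewrite /mcf_bound => DD'; have := root_qlnq_ge0 q; nra. Qed.

Lemma succ_le_of_le_sqrt (mu q : nat) : (2 <= mu)%nat -> INR mu <= sqrt (INR q) ->
  (mu.+1 <= q)%nat.
Proof.
move=> mu2 mu_sqrt; have Q0 := pos_INR q; have mu0 := pos_INR mu.
have : INR mu * INR mu <= INR q.
  by rewrite -[INR q](sqrt_sqrt _ Q0); apply: Rmult_le_compat.
rewrite -INR_muln => /INR_le/leP; move: mu2; nia.
Qed.

Lemma succ_le_of_delta_bound (mu q : nat) : (3 <= q)%nat ->
  INR mu <= / 2 * ((1 - mcf_delta q) * INR q - mcf_delta q + 1) + 1 -> (mu.+1 <= q)%nat.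
Proof.
rewrite /mcf_delta => q3 mu_le; set s := root_qlnq q in mu_le.
have Q3 : 3 <= INR q := IZR_le_INR q3.
have ss : s * s = (INR q + 1) * ln (INR q + 1) := root_qlnq_sq q.
have ln_pos : 0 < ln (INR q + 1) by rewrite -ln_1; apply: ln_increasing; lra.
have ln_le : ln (INR q + 1) <= INR q + 1.
  by have := exp_ineq1_le (ln (INR q + 1)); rewrite exp_ln; lra.
have s0 : 0 < s by have : 0 <= s := root_qlnq_ge0 q; nra.
(* the bracket equals (q + 1) (1 - 1/s), and s <= q + 1 *)
have sq : s <= INR q + 1 by nra.
have : (1 - / s) * INR q - / s + 1 <= INR q.
  have -> : (1 - / s) * INR q - / s + 1 = (INR q + 1) - (INR q + 1) / s by field; lra.
  suff : 1 <= (INR q + 1) / s by lra.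
  by apply: (Rmult_le_reg_r s) => //; rewrite /Rdiv Rmult_assoc Rinv_l; lra.
move=> bracket_le; have : INR (2 * mu) <= INR (q + 2) by rewrite INR_muln INR_addn /=; lra.
by move=> /INR_le/leP; move: q3; lia.
Qed.

End RealEstimates.

Theorem corollary2 (F : finFieldType) (mu : nat) (D : R) :
  (2 <= mu)%N ->
  ((D = (24 / 10)%R /\ mu = 2%N /\ (97 <= #|F|)%N) \/
   (D = (26 / 10)%R /\ mu = 3%N /\ (181 <= #|F|)%N) \/
   (D = (28 / 10)%R /\ mu = 4%N /\ (125 <= #|F|)%N) \/
   (D = INR (mu + 1) /\ (INR mu <= sqrt (INR #|F|))%R /\ (4 <= #|F|)%N) \/
   (D = (2 * INR mu - 1)%R /\
    (INR mu <= / 2 * ((1 - mcf_delta #|F|) * INR #|F| - mcf_delta #|F| + 1) + 1)%R /\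
    (3 <= #|F|)%N)) ->
  ell_mu_le F mu 2 3 (mcf_bound D #|F|).
Proof.
move=> mu2; have mu0 : (0 < mu)%nat by apply: leq_trans mu2.
have s0 := root_qlnq_ge0 #|F|.
case=> [[-> [-> q97]] | [[-> [-> q181]] | [[-> [-> q125]] |
        [[-> [mu_sqrt q4]] | [-> [mu_delta q3]]]]]].
- have Q : (97 <= INR #|F|)%R := IZR_le_INR q97.
  have s_ge := @le_root_qlnq_large #|F| 4 ltac:(lra) ltac:(lra) ltac:(lra).
  apply: ell_mu_le_mono (@ell_mu_le_double_hit_bound F 2 1 q97 isT isT isT) _.
  by rewrite /mcf_bound; cbn [INR]; lra.
- have Q : (181 <= INR #|F|)%R := IZR_le_INR q181.
  have s_ge := @le_root_qlnq_large #|F| 20 ltac:(lra) ltac:(lra) ltac:(lra).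
  have q97 : (97 <= #|F|)%nat by apply: leq_trans q181.
  apply: ell_mu_le_mono (@ell_mu_le_double_hit_bound F 3 2 q97 isT isT isT) _.
  by rewrite /mcf_bound; cbn [INR]; lra.
- have Q : (125 <= INR #|F|)%R := IZR_le_INR q125.
  have s_ge := @le_root_qlnq_large #|F| 10 ltac:(lra) ltac:(lra) ltac:(lra).
  have q97 : (97 <= #|F|)%nat by apply: leq_trans q125.
  apply: ell_mu_le_mono (@ell_mu_le_double_hit_bound F 4 2 q97 isT isT isT) _.
  by rewrite /mcf_bound; cbn [INR]; lra.
- have q3 : (3 <= #|F|)%nat by apply: leq_trans q4.
  exact: ell_mu_le_hit_bound mu0 (succ_le_of_le_sqrt mu2 mu_sqrt) q3.
- apply: ell_mu_le_mono (ell_mu_le_hit_bound mu0 (succ_le_of_delta_bound q3 mu_delta) q3) _.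
  apply: mcf_bound_le; rewrite INR_addn; have : (2 <= INR mu)%R := IZR_le_INR mu2.
  by cbn [INR]; lra.
Qed.
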